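(* In the altruistic controlled social learning model described in the context, $V^*_A(b)\le0$ for all $b\in[0,1]$, $V^*_A(b)=V^*_A(1-b)$ for all $b\in[0,1]$, and $V^*_A(0)=V^*_A(1)=0$, with $\pi^*_A(0)=\pi^*_A(1)=p$.
   Context: A binary state $\omega\in\{G,B\}$ is drawn once. Agents $i=1,2,\dots$ act in sequence; a planner chooses precision $q_i\in[0.5,1]$ and agent $i$ receives a private signal $s_i$ with $\mathbb{P}(s_i=\omega)=q_i$, conditionally independent given $\omega$. Let $y(b,q)=1+2bq-b-q$, $z(b,q)=b+q-2bq$. With public belief $b_i$, agent $i$ takes $a_i=s_i$ if $1-q_i\le b_i\le q_i$, $G$ if $b_i>q_i$, $B$ if $b_i<1-q_i$; the public belief becomes $\frac{q_ib_i}{y(b_i,q_i)}$ (if $s_i=G$) or $\frac{(1-q_i)b_i}{z(b_i,q_i)}$ (if $s_i=B$) when $1-q_i\le b_i\le q_i$, and stays $b_i$ otherwise. With $C>0$, baseline $p\in[0.5,1)$ and cost $\beta:[0.5,1]\to[0,\infty)$ non-negative, increasing, continuous, concave with $\beta(p)=0$, the altruistic reward is $r_A(b,q)=-\beta(q)-C\min(b,1-b,1-q)$. Policies are deterministic Markov maps $\pi:[0,1]\to[0.5,1]$; for $\delta\in[0,1)$, $V^\pi_A(b)=\mathbb{E}[\sum_{i\ge1}\delta^{i-1}r_A(b_i,\pi(b_i))\mid b_1=b]$, $V^*_A=\sup_\pi V^\pi_A$, and $\pi^*_A$ is an optimal policy. *)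

From Stdlib Require Import Reals.
From Coquelicot Require Import Coquelicot.
Open Scope R_scope.

Definition yq (b q : R) : R := 1 + 2 * b * q - b - q.
Definition zq (b q : R) : R := b + q - 2 * b * q.

Definition rA (beta : R -> R) (C b q : R) : R :=
  - beta q - C * Rmin b (Rmin (1 - b) (1 - q)).

Definition cost_ok (beta : R -> R) (p : R) : Prop :=
  (forall x, 1/2 <= x <= 1 -> 0 <= beta x) /\
  (forall x y, 1/2 <= x <= 1 -> 1/2 <= y <= 1 -> x <= y -> beta x <= beta y) /\
  (forall x, 1/2 <= x <= 1 -> forall eps, 0 < eps -> exists d, 0 < d /\
      forall y, 1/2 <= y <= 1 -> Rabs (y - x) < d -> Rabs (beta y - beta x) < eps) /\
  (forall x y t, 1/2 <= x <= 1 -> 1/2 <= y <= 1 -> 0 <= t <= 1 ->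
      t * beta x + (1 - t) * beta y <= beta (t * x + (1 - t) * y)) /\
  beta p = 0.

Definition policy (pi : R -> R) : Prop := forall b, 1/2 <= pi b <= 1.

(* Vn n pi b = E[ sum_{i=1}^{n} delta^(i-1) r_A(b_i, pi b_i) | b_1 = b ],
   computed via the belief dynamics: if 1-q <= b <= q the agent follows its
   signal, which is G with probability y(b,q) (belief -> q b / y) and B with
   probability z(b,q) (belief -> (1-q) b / z); otherwise the belief stays. *)
Fixpoint Vn (beta : R -> R) (C delta : R) (pi : R -> R) (n : nat) (b : R) : R :=
  match n with
  | O => 0
  | S m =>
      let q := pi b in
      rA beta C b q + delta *
        (if Rle_dec (1 - q) b then
           if Rle_dec b q then
             yq b q * Vn beta C delta pi m (q * b / yq b q)
             + zq b q * Vn beta C delta pi m ((1 - q) * b / zq b q)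
           else Vn beta C delta pi m b
         else Vn beta C delta pi m b)
  end.

Definition VA (beta : R -> R) (C delta : R) (pi : R -> R) (b : R) : Rbar :=
  Lim_seq (fun n => Vn beta C delta pi n b).

Definition VAstar (beta : R -> R) (C delta : R) (b : R) : Rbar :=
  Lub_Rbar (fun v => exists pi, policy pi /\ VA beta C delta pi b = Finite v).

(* Every one-step reward is nonpositive and Bayesian updating keeps the belief
   in [0,1], so every policy has a nonpositive value.  Exchanging the labels G
   and B maps the belief b to 1 - b, the policy pi to t |-> pi (1 - t), fixes
   the reward and swaps the two signal branches, which gives the symmetry.  At
   b = 0 or 1 with precision p < 1 no agent follows her signal, so the belief
   never moves and every reward is -beta p = 0: the value 0 is attained there,
   hence optimal. *)
From Stdlib Require Import Reals Lra Psatz.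
From Coquelicot Require Import Coquelicot.
Open Scope R_scope.

Lemma yq_ge0 b q : 0 <= b <= 1 -> 0 <= q <= 1 -> 0 <= yq b q.
Proof. intros; unfold yq; nra. Qed.

Lemma zq_ge0 b q : 0 <= b <= 1 -> 0 <= q <= 1 -> 0 <= zq b q.
Proof. intros; unfold zq; nra. Qed.

Lemma yq_reflect b q : yq (1 - b) q = zq b q.
Proof. unfold yq, zq; ring. Qed.

Lemma zq_reflect b q : zq (1 - b) q = yq b q.
Proof. unfold yq, zq; ring. Qed.

Lemma ratio_in01 a y : 0 <= a <= y -> 0 < y -> 0 <= a / y <= 1.
Proof.
  intros Ha Hy; split.
  - unfold Rdiv; apply Rmult_le_pos; [lra|].
    left; apply Rinv_0_lt_compat; lra.
  - apply Rmult_le_reg_r with y; [lra|].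
    unfold Rdiv; rewrite Rmult_assoc, Rinv_l, Rmult_1_r; lra.
Qed.

Lemma posteriorG_in01 b q :
  0 <= b <= 1 -> 0 <= q <= 1 -> yq b q <> 0 -> 0 <= q * b / yq b q <= 1.
Proof.
  intros Hb Hq Hy; apply ratio_in01.
  - unfold yq in *; split; nra.
  - pose proof (yq_ge0 b q Hb Hq); lra.
Qed.

Lemma posteriorB_in01 b q :
  0 <= b <= 1 -> 0 <= q <= 1 -> zq b q <> 0 -> 0 <= (1 - q) * b / zq b q <= 1.
Proof.
  intros Hb Hq Hz; apply ratio_in01.
  - unfold zq in *; split; nra.
  - pose proof (zq_ge0 b q Hb Hq); lra.
Qed.

Lemma posteriorG_reflect b q :
  yq b q <> 0 -> (1 - q) * (1 - b) / yq b q = 1 - q * b / yq b q.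
Proof. intros Hy; field_simplify_eq; [unfold yq; ring | exact Hy]. Qed.

Lemma posteriorB_reflect b q :
  zq b q <> 0 -> q * (1 - b) / zq b q = 1 - (1 - q) * b / zq b q.
Proof. intros Hz; field_simplify_eq; [unfold zq; ring | exact Hz]. Qed.

Lemma rA_nonpos beta C b q :
  (forall x, 1/2 <= x <= 1 -> 0 <= beta x) -> 0 <= C ->
  0 <= b <= 1 -> 1/2 <= q <= 1 -> rA beta C b q <= 0.
Proof.
  intros Hbeta HC Hb Hq; unfold rA.
  pose proof (Hbeta q Hq).
  assert (0 <= Rmin b (Rmin (1 - b) (1 - q)))
    by (apply Rmin_glb; [lra | apply Rmin_glb; lra]).
  nra.
Qed.

Lemma rA_reflect beta C b q : rA beta C (1 - b) q = rA beta C b q.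
Proof.
  unfold rA; replace (1 - (1 - b)) with b by ring.
  do 2 f_equal; unfold Rmin; repeat destruct Rle_dec; lra.
Qed.

Lemma rA_absorbing beta C b q :
  0 <= q <= 1 -> (b = 0 \/ b = 1) -> rA beta C b q = - beta q.
Proof.
  intros Hq Hb; unfold rA.
  destruct Hb as [-> | ->]; unfold Rmin; repeat destruct Rle_dec; lra.
Qed.

Section Values.

Variables (beta : R -> R) (C delta : R).

Lemma Vn_nonpos pi n b :
  (forall x, 1/2 <= x <= 1 -> 0 <= beta x) -> 0 <= C -> 0 <= delta ->
  policy pi -> 0 <= b <= 1 -> Vn beta C delta pi n b <= 0.
Proof.
  intros Hbeta HC Hd Hpi; revert b.
  induction n as [|m IH]; intros b Hb; simpl; [lra|].
  pose proof (Hpi b) as Hq; set (q := pi b) in *.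
  assert (Hq01 : 0 <= q <= 1) by lra.
  pose proof (rA_nonpos beta C b q Hbeta HC Hb Hq).
  assert (HG : yq b q * Vn beta C delta pi m (q * b / yq b q) <= 0).
  { pose proof (yq_ge0 b q Hb Hq01).
    destruct (Req_dec (yq b q) 0) as [E | E]; [rewrite E; lra|].
    pose proof (IH _ (posteriorG_in01 b q Hb Hq01 E)); nra. }
  assert (HB : zq b q * Vn beta C delta pi m ((1 - q) * b / zq b q) <= 0).
  { pose proof (zq_ge0 b q Hb Hq01).
    destruct (Req_dec (zq b q) 0) as [E | E]; [rewrite E; lra|].
    pose proof (IH _ (posteriorB_in01 b q Hb Hq01 E)); nra. }
  pose proof (IH b Hb).
  destruct Rle_dec; [destruct Rle_dec|]; nra.
Qed.

Lemma Vn_reflect pi n b :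
  Vn beta C delta (fun t => pi (1 - t)) n (1 - b) = Vn beta C delta pi n b.
Proof.
  revert b; induction n as [|m IH]; intros b; simpl; [reflexivity|].
  replace (1 - (1 - b)) with b by ring.
  set (q := pi b).
  rewrite rA_reflect, yq_reflect, zq_reflect.
  assert (HG : zq b q * Vn beta C delta (fun t => pi (1 - t)) m (q * (1 - b) / zq b q)
               = zq b q * Vn beta C delta pi m ((1 - q) * b / zq b q)).
  { destruct (Req_dec (zq b q) 0) as [E | E]; [rewrite E; ring|].
    now rewrite posteriorB_reflect, IH. }
  assert (HB : yq b q * Vn beta C delta (fun t => pi (1 - t)) m ((1 - q) * (1 - b) / yq b q)
               = yq b q * Vn beta C delta pi m (q * b / yq b q)).
  { destruct (Req_dec (yq b q) 0) as [E | E]; [rewrite E; ring|].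
    now rewrite posteriorG_reflect, IH. }
  rewrite HG, HB, IH.
  repeat destruct Rle_dec; try lra.
Qed.

Lemma Vn_absorbing pi p n b :
  0 <= p < 1 -> beta p = 0 -> pi b = p -> (b = 0 \/ b = 1) ->
  Vn beta C delta pi n b = 0.
Proof.
  intros Hp Hbp Hpib Hb.
  induction n as [|m IH]; simpl; [reflexivity|].
  rewrite Hpib, IH, rA_absorbing, Hbp by lra.
  destruct Hb as [-> | ->]; repeat destruct Rle_dec; lra.
Qed.

Lemma VA_nonpos pi b :
  (forall x, 1/2 <= x <= 1 -> 0 <= beta x) -> 0 <= C -> 0 <= delta ->
  policy pi -> 0 <= b <= 1 -> Rbar_le (VA beta C delta pi b) (Finite 0).
Proof.
  intros; rewrite <- Lim_seq_const; unfold VA.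
  apply Lim_seq_le_loc; exists O; intros n _.
  now apply Vn_nonpos.
Qed.

Lemma VA_reflect pi b :
  VA beta C delta (fun t => pi (1 - t)) (1 - b) = VA beta C delta pi b.
Proof. apply Lim_seq_ext; intros n; apply Vn_reflect. Qed.

Lemma VA_absorbing pi p b :
  0 <= p < 1 -> beta p = 0 -> pi b = p -> (b = 0 \/ b = 1) ->
  VA beta C delta pi b = Finite 0.
Proof.
  intros; unfold VA; rewrite <- Lim_seq_const.
  apply Lim_seq_ext; intros n; now apply Vn_absorbing with p.
Qed.

Lemma VAstar_le b v :
  (forall pi, policy pi -> Rbar_le (VA beta C delta pi b) v) ->
  Rbar_le (VAstar beta C delta b) v.
Proof.
  intros Hv; apply Lub_Rbar_correct.
  intros x [pi [Hpi E]]; rewrite <- E; now apply Hv.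
Qed.

Lemma VA_le_VAstar pi b v :
  policy pi -> VA beta C delta pi b = Finite v -> Rbar_le v (VAstar beta C delta b).
Proof. intros Hpi E; apply Lub_Rbar_correct; now exists pi. Qed.

Lemma VAstar_reflect b : VAstar beta C delta (1 - b) = VAstar beta C delta b.
Proof.
  apply Lub_Rbar_eqset; intros v; split; intros [pi [Hpi E]];
    exists (fun t => pi (1 - t)); (split; [intros t; apply Hpi|]).
  - rewrite <- E, <- (VA_reflect pi (1 - b)); f_equal; ring.
  - now rewrite VA_reflect.
Qed.

End Values.

Lemma VAstar_absorbing beta C delta p b :
  (forall x, 1/2 <= x <= 1 -> 0 <= beta x) -> 0 <= C -> 0 <= delta ->
  1/2 <= p < 1 -> beta p = 0 -> (b = 0 \/ b = 1) ->
  VAstar beta C delta b = Finite 0.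
Proof.
  intros Hbeta HC Hd Hp Hbp Hb.
  apply Rbar_le_antisym.
  - apply VAstar_le; intros pi Hpi.
    apply VA_nonpos; auto; destruct Hb as [-> | ->]; lra.
  - apply VA_le_VAstar with (fun _ => p); [intros t; lra|].
    apply VA_absorbing with p; auto; lra.
Qed.

Theorem lemma8 (beta : R -> R) (C p delta : R) :
  0 < C -> 1/2 <= p < 1 -> 0 <= delta < 1 -> cost_ok beta p ->
  (forall b, 0 <= b <= 1 -> Rbar_le (VAstar beta C delta b) (Finite 0)) /\
  (forall b, 0 <= b <= 1 -> VAstar beta C delta b = VAstar beta C delta (1 - b)) /\
  VAstar beta C delta 0 = Finite 0 /\ VAstar beta C delta 1 = Finite 0 /\
  (forall pi, policy pi -> pi 0 = p -> pi 1 = p ->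
     VA beta C delta pi 0 = VAstar beta C delta 0 /\
     VA beta C delta pi 1 = VAstar beta C delta 1).
Proof.
  intros HC Hp Hd [Hbeta [_ [_ [_ Hbp]]]].
  assert (HC0 : 0 <= C) by lra.
  assert (Hd0 : 0 <= delta) by lra.
  assert (Hp0 : 0 <= p < 1) by lra.
  assert (Hopt : forall b, (b = 0 \/ b = 1) -> VAstar beta C delta b = Finite 0)
    by (intros; now apply VAstar_absorbing with p).
  split; [|split; [|split; [|split]]].
  - intros b Hb; apply VAstar_le; intros pi Hpi; now apply VA_nonpos.
  - intros b _; symmetry; apply VAstar_reflect.
  - now apply Hopt; left.
  - now apply Hopt; right.
  - intros pi _ H0 H1; rewrite !Hopt by auto.
    split; apply VA_absorbing with p; auto.
Qed.
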